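(* Let $X$ be a Polish space (complete separable metric space with metric $d$) and $f:X\to X$ a continuous map. If for some $\delta>0$ the map $f$ has an uncountable $\delta$-scrambled set, then $f$ has an expansive measure, i.e., there are a Borel probability measure $\mu$ on $X$ and $\epsilon>0$ such that $\mu(\Phi_\epsilon(x))=0$ for all $x\in X$.
   Context: Here $\Phi_\epsilon(x)=\{y\in X: d(f^i(y),f^i(x))\le\epsilon \text{ for all } i\in\mathbb{N}\}$, $\mathbb{N}=\{0,1,2,\dots\}$. For $\delta\ge0$, a $\delta$-scrambled set of $f$ is a subset $S\subset X$ such that for all distinct $x,y\in S$: $\liminf_{n\to\infty}d(f^n(x),f^n(y))=0$ and $\limsup_{n\to\infty}d(f^n(x),f^n(y))>\delta$. *)

From HB Require Import structures.
From mathcomp Require Import all_boot all_order all_algebra.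
From mathcomp Require Import all_classical all_reals all_analysis.
Set Implicit Arguments. Unset Strict Implicit. Unset Printing Implicit Defensive.
Import Order.TTheory GRing.Theory Num.Theory.
Local Open Scope classical_set_scope.
Local Open Scope ring_scope.

(* Nonempty (pointed) metric spaces: needed because MathComp-Analysis builds
   generated sigma-algebras (g_sigma_algebraType) only on pointed types.
   Nonemptiness is implied by the theorem's hypothesis (uncountable S). *)
#[short(type="pmetricType")]
HB.structure Definition PointedMetric (K : numDomainType) :=
  { M of Metric K M & isPointed M }.

Definition complete_metric {R : realType} (X : metricType R) : Prop :=
  forall u : nat -> X,
    (forall eps : R, 0 < eps -> exists N : nat,
        forall m n : nat, (N <= m)%N -> (N <= n)%N -> mdist (u m) (u n) < eps) ->
    exists l : X, u @ \oo --> l.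

Definition separable_space {R : realType} (X : metricType R) : Prop :=
  exists D : set X, countable D /\ dense D.

Definition polish {R : realType} (X : metricType R) : Prop :=
  complete_metric X /\ separable_space X.

Definition Phi {R : realType} {X : metricType R} (f : X -> X) (eps : R) (x : X)
  : set X := [set y | forall i : nat, mdist (iter i f y) (iter i f x) <= eps].

Definition scrambled {R : realType} {X : metricType R} (f : X -> X) (delta : R)
  (S : set X) : Prop :=
  forall x y, S x -> S y -> x <> y ->
    limn_einf (fun n => (mdist (iter n f x) (iter n f y))%:E) = 0%E /\
    (delta%:E < limn_esup (fun n => (mdist (iter n f x) (iter n f y))%:E))%E.

Notation borel_of X := (g_sigma_algebraType (@open X)).

From HB Require Import structures.
From mathcomp Require Import all_boot all_order all_algebra.
From mathcomp Require Import all_classical all_reals all_analysis.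
From mathcomp Require Import ring lra.
Set Implicit Arguments. Unset Strict Implicit. Unset Printing Implicit Defensive.
Import Order.TTheory GRing.Theory Num.Theory.
Import metricType_numDomainType.
Local Open Scope classical_set_scope.
Local Open Scope ring_scope.

(* The condensation points of the uncountable scrambled set S that lie in S form
   a nonempty set A without isolated points (separability).  Two distinct points
   of A are more than delta apart at some time n (only the limsup half of
   scrambledness is needed), hence, by continuity of f^n, so are all points of
   two small balls around them.  This splits every closed ball centred in A into
   two sub-balls of at most half the radius whose points have delta-apart orbits.
   Iterating along binary expansions and using completeness yields a measurable
   h : [0, 1] -> X under which distinct parameters have delta-apart orbits.  Two
   points of Phi_{delta/2}(x) stay within delta of each other forever, so the
   image under h of the uniform measure on [0, 1] gives Phi_{delta/2}(x) the
   measure of at most one point, i.e. 0. *)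

Lemma countableU T (A B : set T) :
  countable A -> countable B -> countable (A `|` B).
Proof.
move=> cA cB.
have -> : A `|` B = \bigcup_(b in [set: bool]) (if b then A else B).
  apply/seteqP; split => [x [Ax|Bx]|x [[] _ ?]];
  by [exists true | exists false | left | right].
by apply: bigcup_countable => [|[]]; first exact: countableP.
Qed.

Lemma lt_limn_esup_exists (R : realType) (u : R^nat) (a : R) :
  (a%:E < limn_esup (EFin \o u))%E -> exists n, a < u n.
Proof.
apply: contraPP => /forallNP ua; apply/negP; rewrite -leNgt limn_esup_lim.
apply: lime_le; first exact: is_cvg_esups.
apply: nearW => n; apply: ge_ereal_sup => _ [m _ <-].
by rewrite lee_fin leNgt; apply/negP/ua.
Qed.

Lemma ex_lt_div_exp2 (R : realType) (a e : R) : 0 < e -> exists k, a / 2 ^+ k < e.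
Proof.
move=> e0; exists (Num.truncn (a / e)).+1.
have le_exp2 : (Num.truncn (a / e)).+1%:R <= 2 ^+ (Num.truncn (a / e)).+1 :> R.
  by rewrite -natrX ler_nat ltnW // ltn_expl.
have := truncnS_gt (a / e); rewrite ltr_pdivrMr // ltr_pdivrMr ?exprn_gt0 //.
nra.
Qed.

Lemma truncn_mul2_half (R : archiRealFieldType) (x : R) :
  (Num.truncn (x * 2))./2 = Num.truncn x.
Proof.
have n2 k : (k.*2)%:R = k%:R * 2 :> R by rewrite -muln2 natrM.
apply/eqP; rewrite eqn_leq leq_half_double geq_half_double.
rewrite truncn_le_nat -doubleS n2 ltr_pM2r ?truncnS_gt //=.
have [x0|x1] := leP 0 x; last first.
  by have /truncn0Pn -> : ~~ (1 <= x) by rewrite -ltNge; lra.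
by rewrite truncn_ge_nat ?n2 ?ler_pM2r ?truncn_le //; lra.
Qed.

Lemma measurable_truncn_eq (R : realType) (a : R) (m : nat) : 0 < a ->
  measurable [set t : measurableTypeR R | Num.truncn (t * a) = m].
Proof.
move=> a0.
have lt_itv c : [set t : R | t * a < c] = `]-oo, c / a[%classic.
  by apply/seteqP; split => t; rewrite /= in_itv /= ltr_pdivlMr.
have ge_itv c : [set t : R | c <= t * a] = `[c / a, +oo[%classic.
  by apply/seteqP; split => t; rewrite /= in_itv /= ler_pdivrMr ?andbT.
case: m => [|k].
  have -> : [set t : R | Num.truncn (t * a) = 0%N] = [set t | t * a < 1%:R].
    by apply/seteqP; split => t /=; rewrite -truncn_le_nat leqn0 => /eqP.
  by rewrite lt_itv; exact: measurable_itv.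
have -> : [set t : R | Num.truncn (t * a) = k.+1] =
    [set t | k.+1%:R <= t * a] `&` [set t | t * a < k.+2%:R].
  apply/seteqP; split => t /=; rewrite -truncn_gt_nat -truncn_le_nat.
    by move=> ->; split.
  by case=> *; apply/eqP; rewrite eqn_leq; apply/andP.
by rewrite ge_itv lt_itv; apply: measurableI; exact: measurable_itv.
Qed.

Section MetricFacts.
Context {R : realType} {X : pmetricType R}.

Definition dense_in_itself (A : set X) : Prop :=
  forall y, A y -> forall r, 0 < r -> exists z, [/\ A z, z <> y & mdist y z < r].

Lemma dense_mdist_lt (D : set X) : dense D ->
  forall y e, 0 < e -> exists2 w, D w & mdist y w < e.
Proof.
move=> dD y e e0.
have [|w [/interior_subset + Dw]] := dD (interior (ball y e)) _ (@open_interior _ _).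
  by exists y; exact: nbhsx_ballx.
by rewrite ballEmdist; exists w.
Qed.

Lemma separable_uncountable_dense_in_itself (S : set X) :
  separable_space X -> ~ countable S ->
  exists2 A, A `<=` S & A !=set0 /\ dense_in_itself A.
Proof.
move=> [D [cD dD]] ncS.
pose near_S y r := S `&` [set z | mdist y z < r].
pose A := [set y | S y /\ forall r, 0 < r -> ~ countable (near_S y r)].
have cSA : countable (S `\` A).
  pose I := [set i : X * nat | D i.1 /\ countable (near_S i.1 (1 / 2 ^+ i.2))].
  apply: (@sub_countable _ _ _ (\bigcup_(i in I) near_S i.1 (1 / 2 ^+ i.2))).
    apply: subset_card_le => y [Sy /not_andP[//|/existsNP[r /not_implyP[r0]]]].
    move=> /contrapT cr.
    have [n n_lt] := @ex_lt_div_exp2 R 1 (r / 2) ltac:(lra).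
    have n_gt0 : 0 < 1 / 2 ^+ n :> R by rewrite divr_gt0 ?exprn_gt0.
    have [w Dw yw] := dense_mdist_lt dD y n_gt0.
    exists (w, n); last by split; rewrite //= metric_sym.
    split => //; apply: sub_countable cr; apply: subset_card_le => z [Sz wz].
    by split => //=; have := metric_triangle y w z; rewrite /= in wz; lra.
  apply: bigcup_countable => [|i [] //].
  apply: sub_countable (countableX cD (countableP [set: nat])).
  by apply: subset_card_le => i [Di _].
have SA : S `<=` A `|` (S `\` A).
  by move=> y Sy; have [|] := pselect (A y); [left | right].
have ncA : ~ countable A.
  by move=> cA; apply/ncS/(sub_countable (subset_card_le SA))/countableU.
exists A => [y [] //|]; split.
  by apply/set0P/eqP => A0; apply: ncA; rewrite A0; exact: countable0.
move=> y [Sy Ay] r r0; apply: contrapT => /forallNP noz; apply: (Ay r r0).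
have : near_S y r `<=` [set y] `|` (S `\` A).
  move=> z [Sz yz]; have [->|zy] := pselect (z = y); [by left | right].
  by split => // Az; apply: (noz z).
by move/subset_card_le/sub_countable; apply; exact: countableU (countable1 y) cSA.
Qed.

Lemma continuous_iter (f : X -> X) n : continuous f -> continuous (iter n f).
Proof.
move=> cf; elim: n => [|n IH] x /=; first exact: cvg_id.
exact: continuous_comp (IH x) (cf _).
Qed.

Lemma continuous_mdist_lt (F : X -> X) (c : X) (e : R) : continuous F -> 0 < e ->
  exists2 rho, 0 < rho & forall y, mdist c y < rho -> mdist (F c) (F y) < e.
Proof.
move=> cF e0.
have /(_ (nbhs_filter c))/nbhs_mdistP[rho rho0 H] := cvgr_dist_lt (cF c) e0.
by exists rho.
Qed.

End MetricFacts.

Definition cball {R : numDomainType} {X : metricType R} (p : X * R) : set X :=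
  [set y | mdist p.1 y <= p.2].

Section NestedBalls.
Context {R : realType} {X : pmetricType R}.
Variable C : nat -> X * R.
Hypothesis C_gt0 : forall k, 0 < (C k).2.
Hypothesis C_nested : forall k, mdist (C k).1 (C k.+1).1 + (C k.+1).2 <= (C k).2.
Hypothesis C_halves : forall k, (C k.+1).2 <= (C k).2 / 2.

Lemma nested_mdistD k m : mdist (C k).1 (C (k + m)).1 + (C (k + m)).2 <= (C k).2.
Proof.
elim: m => [|m IH]; first by rewrite addn0 mdistxx add0r.
rewrite addnS; have := C_nested (k + m).
by have := metric_triangle (C k).1 (C (k + m)).1 (C (k + m).+1).1; lra.
Qed.

Lemma nested_center k n : (k <= n)%N -> mdist (C k).1 (C n).1 <= (C k).2.
Proof.
move=> /subnKC <-; have := nested_mdistD k (n - k).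
by have := C_gt0 (k + (n - k)); lra.
Qed.

Lemma nested_radius k : (C k).2 <= (C 0).2 / 2 ^+ k.
Proof.
elim: k => [|k IH]; first by rewrite expr0 divr1.
have -> : (C 0).2 / 2 ^+ k.+1 = (C 0).2 / 2 ^+ k / 2 by rewrite exprSr invfM mulrA.
by have := C_halves k; lra.
Qed.

Lemma nested_radius_lt e : 0 < e -> exists k, (C k).2 < e.
Proof.
move=> e0; have [k k_lt] := ex_lt_div_exp2 (C 0).2 e0.
by exists k; apply: le_lt_trans (nested_radius k) k_lt.
Qed.

Lemma nested_limit : complete_metric X -> exists l, forall k, cball (C k) l.
Proof.
move=> cX; have [l Cl] : exists l : X, (fun k => (C k).1) @ \oo --> l.
  apply: cX => e e0; have [N N_lt] := @nested_radius_lt (e / 2) ltac:(lra).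
  exists N => m n Nm Nn; have := nested_center Nm; have := nested_center Nn.
  have := metric_triangle (C m).1 (C N).1 (C n).1.
  by rewrite (metric_sym (C m).1 (C N).1); lra.
exists l => k; apply/ler_addgt0Pr => e e0.
have := cvgr_dist_lt Cl e0; move=> /(_ eventually_filter) [N _ CNl].
have := CNl _ (leq_maxl N k); have := nested_center (leq_maxr N k).
have := metric_triangle (C k).1 (C (maxn N k)).1 l.
by rewrite (metric_sym l (C (maxn N k)).1); lra.
Qed.

Lemma nested_limit_open l (U : set X) :
  (forall k, cball (C k) l) -> open U -> U l -> exists k, cball (C k) `<=` U.
Proof.
move=> Cl oU Ul; have /nbhs_mdistP[e /= e0 eU] : nbhs l U by exact: open_nbhs_nbhs.
have [k k_lt] := @nested_radius_lt (e / 2) ltac:(lra).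
exists k => y Cy; apply: eU => /=; have := Cl k; rewrite /cball /= in Cy *.
by have := metric_triangle l (C k).1 y; rewrite (metric_sym l (C k).1); lra.
Qed.

End NestedBalls.

Section Splitting.
Context {R : realType} {X : pmetricType R}.

Definition orbit_apart (f : X -> X) (delta : R) (y z : X) : Prop :=
  exists n, delta < mdist (iter n f y) (iter n f z).

Definition splits (A : set X) (far : X -> X -> Prop) (p : X * R)
    (s : bool -> X * R) : Prop :=
  [/\ forall j, A (s j).1 /\ 0 < (s j).2,
      forall j, mdist p.1 (s j).1 + (s j).2 <= p.2,
      forall j, (s j).2 <= p.2 / 2 &
      forall y z, cball (s false) y -> cball (s true) z -> far y z].

Variables (f : X -> X) (delta : R) (A : set X).
Hypothesis f_cont : continuous f.
Hypothesis A_dense : dense_in_itself A.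
Hypothesis A_apart : forall y z, A y -> A z -> y <> z -> orbit_apart f delta y z.

Lemma exists_split (p : X * R) : A p.1 -> 0 < p.2 ->
  exists s, splits A (orbit_apart f delta) p s.
Proof.
case: p => c r /= Ac r0.
have [c' [Ac' c'c cc']] := A_dense Ac (ltac:(lra) : 0 < r / 2).
have [n F_apart] := A_apart Ac Ac' (nesym c'c); set F := iter n f in F_apart.
have F_cont : continuous F by exact: continuous_iter.
(* F moves points of the two sub-balls by less than eta, where 2 eta is the
   margin by which F c and F c' are more than delta apart. *)
pose eta := (mdist (F c) (F c') - delta) / 2.
have eta0 : 0 < eta by rewrite /eta; lra.
have [rho rho0 Fc] := continuous_mdist_lt c F_cont eta0.
have [rho' rho'0 Fc'] := continuous_mdist_lt c' F_cont eta0.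
pose r' := Num.min (r / 4) (Num.min rho rho' / 2).
have r'_r : r' <= r / 4 by rewrite ge_min lexx.
have r'_rho : r' <= Num.min rho rho' / 2 by rewrite ge_min lexx orbT.
have [rho_min rho'_min] : Num.min rho rho' <= rho /\ Num.min rho rho' <= rho'.
  by rewrite !ge_min !lexx orbT.
have r'0 : 0 < r'.
  by rewrite lt_min; apply/andP; split; [lra | rewrite divr_gt0 // lt_min rho0].
exists (fun j => if j then (c', r') else (c, r')).
split => [[]|[]|[]|y z cy c'z] //=.
- by lra.
- by rewrite mdistxx; lra.
- by lra.
- by lra.
rewrite /cball /= in cy c'z.
exists n; have := Fc y ltac:(lra); have := Fc' z ltac:(lra).
have := metric_triangle (F c) (F y) (F c'); have := metric_triangle (F y) (F z) (F c').
by rewrite (metric_sym (F z)); rewrite /eta in eta0 *; lra.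
Qed.

Lemma exists_splitting : exists step : X * R -> bool -> X * R,
  forall p, A p.1 -> 0 < p.2 -> splits A (orbit_apart f delta) p (step p).
Proof.
have /choice[step stepP] : forall p, exists s,
    A p.1 -> 0 < p.2 -> splits A (orbit_apart f delta) p s.
  move=> p; have [[Ap p0]|np] := pselect (A p.1 /\ 0 < p.2).
    by have [s ps] := exists_split Ap p0; exists s.
  by exists (fun => p) => Ap p0; case: np.
by exists step.
Qed.

End Splitting.

Section CantorScheme.
Context {R : realType} {X : pmetricType R}.
Variables (A : set X) (far : X -> X -> Prop).
Variables (step : X * R -> bool -> X * R) (root : X * R).
Hypothesis X_complete : complete_metric X.
Hypothesis root_A : A root.1.
Hypothesis root_gt0 : 0 < root.2.
Hypothesis step_splits : forall p, A p.1 -> 0 < p.2 -> splits A far p (step p).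
Hypothesis farC : forall y z, far y z -> far z y.

(* [node k m] is the ball reached from [root] by following the k binary digits
   of m, most significant first. *)
Fixpoint node (k m : nat) : X * R :=
  if k is k'.+1 then step (node k' m./2) (odd m) else root.

(* The integer formed by the first k binary digits of t / 2; halving t makes
   [address 0 t = 0] on [0, 1], so all branches start at [root]. *)
Definition address (k : nat) (t : R) : nat := Num.truncn (t * (2 ^+ k / 2)).

Definition branch (t : R) (k : nat) : X * R := node k (address k t).

Lemma node_good k m : A (node k m).1 /\ 0 < (node k m).2.
Proof.
elim: k m => [|k IH] m //=.
by have [good _ _ _] := step_splits (IH m./2).1 (IH m./2).2; exact: good.
Qed.

Lemma address_half k t : (address k.+1 t)./2 = address k t.
Proof.
rewrite /address.
have -> : t * (2 ^+ k.+1 / 2) = t * (2 ^+ k / 2) * 2 by rewrite exprSr; ring.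
exact: truncn_mul2_half.
Qed.

Lemma address0 t : t <= 1 -> address 0 t = 0%N.
Proof. by move=> t1; apply/truncn0Pn; rewrite -ltNge expr0; lra. Qed.

Lemma branchS t k : branch t k.+1 = step (branch t k) (odd (address k.+1 t)).
Proof. by rewrite /branch /= address_half. Qed.

Lemma branch_splits t k : splits A far (branch t k) (step (branch t k)).
Proof. by have [] := node_good k (address k t); exact: step_splits. Qed.

Lemma branch_gt0 t k : 0 < (branch t k).2.
Proof. exact: (node_good k _).2. Qed.

Lemma branch_nested t k :
  mdist (branch t k).1 (branch t k.+1).1 + (branch t k.+1).2 <= (branch t k).2.
Proof. by rewrite branchS; have [_ + _ _] := branch_splits t k; apply. Qed.

Lemma branch_halves t k : (branch t k.+1).2 <= (branch t k).2 / 2.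
Proof. by rewrite branchS; have [_ _ + _] := branch_splits t k; apply. Qed.

Lemma exists_branch_limit : exists h : R -> X, forall t k, cball (branch t k) (h t).
Proof.
have /choice[h hP] : forall t, exists l : X, forall k, cball (branch t k) l.
  move=> t; apply: nested_limit X_complete.
  - exact: branch_gt0.
  - exact: branch_nested.
  - exact: branch_halves.
by exists h.
Qed.

Section CantorMap.
Variable h : R -> X.
Hypothesis h_branch : forall t k, cball (branch t k) (h t).

Lemma cantor_map_measurable :
  measurable_fun setT (h : measurableTypeR R -> borel_of X).
Proof.
apply: (measurability (@open X : set (set (borel_of X)))) => // _ [U oU <-].
rewrite setTI.
have -> : h @^-1` U = \bigcup_k \bigcup_(m in [set m | cball (node k m) `<=` U])
    [set t | address k t = m].
  apply/seteqP; split => t /=.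
    move=> Uht; have [k kU] := nested_limit_open (branch_halves t) (h_branch t) oU Uht.
    by exists k => //; exists (address k t).
  by move=> [k _ [m /= mU tm]]; apply: mU; rewrite -tm; exact: h_branch.
apply: bigcupT_measurable => k; apply: bigcup_measurable => m _.
by apply: measurable_truncn_eq; rewrite divr_gt0 ?exprn_gt0.
Qed.

Lemma address_separates s t : 0 <= s -> s < t -> exists k, address k s != address k t.
Proof.
move=> s0 st; have [k k_lt] := @ex_lt_div_exp2 R 2 (t - s) ltac:(lra).
exists k; apply/eqP => st_eq.
have pow0 : 0 < 2 ^+ k / 2 :> R by rewrite divr_gt0 ?exprn_gt0.
have lo : (address k s)%:R <= s * (2 ^+ k / 2) by rewrite truncn_le mulr_ge0 // ltW.
have hi : t * (2 ^+ k / 2) < (address k s)%:R + 1 by rewrite natr1 st_eq truncnS_gt.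
by move: k_lt; rewrite ltr_pdivrMr ?exprn_gt0 //; lra.
Qed.

Lemma cantor_map_far s t : 0 <= s <= 1 -> 0 <= t <= 1 -> s <> t -> far (h s) (h t).
Proof.
move=> /andP[s0 s1] /andP[t0 t1] st.
have [K sK] : exists K, address K s != address K t.
  have [/(address_separates s0)//|/(address_separates t0)[K]|//] := ltgtP s t.
  by rewrite eq_sym; exists K.
have ex_sep : exists K, address K s != address K t by exists K.
case: (ex_minnP ex_sep) => -[|k]; first by rewrite !address0.
move=> sk k_min; have sk1 : address k s = address k t.
  by apply/eqP; apply: contraT => /k_min; rewrite ltnn.
have parity : odd (address k.+1 s) != odd (address k.+1 t).
  apply: contra sk => /eqP oddE.
  rewrite -[address k.+1 s]odd_double_half -[address k.+1 t]odd_double_half.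
  by rewrite !address_half sk1 oddE.
have [_ _ _ sep] := branch_splits s k.
have hs := h_branch s k.+1; have ht := h_branch t k.+1.
rewrite branchS in hs; rewrite branchS /branch -sk1 -/(branch s k) in ht.
move: parity hs ht; case: odd; case: odd => //= _ hs ht; last exact: sep.
by apply: farC; exact: sep.
Qed.

End CantorMap.

Lemma cantor_scheme : exists h : R -> X,
  measurable_fun setT (h : measurableTypeR R -> borel_of X) /\
  {in `[0, 1] &, forall s t, s <> t -> far (h s) (h t)}.
Proof.
have [h h_branch] := exists_branch_limit.
exists h; split; first exact: cantor_map_measurable h_branch.
by move=> s t /[!in_itv] /= s01 t01; exact: cantor_map_far.
Qed.

End CantorScheme.

Lemma uniform_prob_subsingleton (R : realType) (a b : R) (ab : a < b) (E : set R) :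
  {in `[a, b] &, forall s t, E s -> E t -> s = t} -> uniform_prob ab E = 0%E.
Proof.
move=> Euniq; rewrite /uniform_prob integral_uniform_pdf.
have [[t [Et tab]]|noE] := pselect (exists t, E t /\ t \in `[a, b]).
  have -> : E `&` `[a, b] = [set t].
    apply/seteqP; split => [s [Es sab]|s ->] //=.
    by apply: Euniq => //; exact/mem_set.
  exact: integral_set1.
have -> : E `&` `[a, b] = set0.
  apply/seteqP; split => // s [Es sab].
  by apply: noE; exists s; split => //; exact/mem_set.
exact: integral_set0.
Qed.

Theorem theorem4p7 (R : realType) (X : pmetricType R) (f : X -> X) :
  polish X -> continuous f ->
  (exists (delta : R) (S : set X),
      0 < delta /\ ~ countable S /\ scrambled f delta S) ->
  exists (mu : probability (borel_of X) R) (eps : R),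
    0 < eps /\ forall x : X, mu (Phi f eps x) = 0%E.
Proof.
move=> [X_complete X_separable] f_cont [delta [S [delta0 [S_uncountable S_scrambled]]]].
have [A AS [[y0 Ay0] A_dense]] :=
  separable_uncountable_dense_in_itself X_separable S_uncountable.
have A_apart y z : A y -> A z -> y <> z -> orbit_apart f delta y z.
  by move=> Ay Az yz; have [_] := S_scrambled y z (AS y Ay) (AS z Az) yz;
    exact: lt_limn_esup_exists.
have [step step_splits] := exists_splitting f_cont A_dense A_apart.
have apartC y z : orbit_apart f delta y z -> orbit_apart f delta z y.
  by move=> [n yz]; exists n; rewrite metric_sym.
have [h [h_meas h_far]] :=
  cantor_scheme (root := (y0, 1)) X_complete Ay0 ltr01 step_splits apartC.
exists (distribution (uniform_prob ltr01) (mfun_Sub (mem_set h_meas))), (delta / 2).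
split => [|x]; first by rewrite divr_gt0.
apply: uniform_prob_subsingleton => s t s01 t01 hs ht.
apply: contrapT => /(h_far s t s01 t01) [n].
have := metric_triangle (iter n f (h s)) (iter n f x) (iter n f (h t)).
by have := hs n; have := ht n; rewrite (metric_sym (iter n f (h t))); lra.
Qed.
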